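(* Let $L$ be a pretransitive logic. Then for all formulas $\varphi,\psi$: $$L[1]\vdash\Box^*\psi\to\Box^*\varphi\quad\text{iff}\quad L\vdash\Diamond^*\Box^*\psi\to\Diamond^*\Box^*\varphi.$$
   Context: Logics are normal $n$-modal logics. $\Diamond^0\varphi=\varphi$, $\Diamond^{i+1}\varphi=\Diamond^i(\bigvee_{j<n}\Diamond_j\varphi)$, $\Diamond^{\le m}\varphi=\bigvee_{i\le m}\Diamond^i\varphi$. $L$ is pretransitive if $L\vdash\Diamond^{m+1}p\to\Diamond^{\le m}p$ for some $m$; for the least such $m$ (for $L$), $\Diamond^*=\Diamond^{\le m}$ and $\Box^*=\neg\Diamond^*\neg$; these same abbreviations are used in $L[1]$. $B_1=p_1\to\Box^*(\Diamond^*p_1\vee\bot)$, and $L[1]$ is the smallest logic containing $L\cup\{B_1\}$. *)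

From mathcomp Require Import all_boot.
Set Implicit Arguments. Unset Strict Implicit. Unset Printing Implicit Defensive.

Inductive form (n : nat) : Type :=
| Var : nat -> form n
| Bot : form n
| Imp : form n -> form n -> form n
| Box : 'I_n -> form n -> form n.
Arguments Bot {n}.

Definition Neg n (a : form n) : form n := Imp a Bot.
Definition Or n (a b : form n) : form n := Imp (Neg a) b.
Definition Dia n (i : 'I_n) (a : form n) : form n := Neg (Box i (Neg a)).

Fixpoint bigOr n (l : seq (form n)) : form n :=
  match l with
  | [::] => Bot
  | [:: a] => a
  | a :: l' => Or a (bigOr l')
  end.

Fixpoint subst n (s : nat -> form n) (a : form n) : form n :=
  match a with
  | Var k => s k
  | Bot => Bot
  | Imp a b => Imp (subst s a) (subst s b)
  | Box i a => Box i (subst s a)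
  end.

Inductive deriv n (G : form n -> Prop) : form n -> Prop :=
| d_hyp a : G a -> deriv G a
| d_A1 a b : deriv G (Imp a (Imp b a))
| d_A2 a b c : deriv G (Imp (Imp a (Imp b c)) (Imp (Imp a b) (Imp a c)))
| d_A3 a : deriv G (Imp (Neg (Neg a)) a)
| d_K (i : 'I_n) a b :
    deriv G (Imp (Box i (Imp a b)) (Imp (Box i a) (Box i b)))
| d_MP a b : deriv G (Imp a b) -> deriv G a -> deriv G b
| d_Nec (i : 'I_n) a : deriv G a -> deriv G (Box i a)
| d_Sub (s : nat -> form n) a : deriv G a -> deriv G (subst s a).

Definition normal_logic n (L : form n -> Prop) : Prop :=
  forall a, deriv L a -> L a.

Definition dia1 n (a : form n) : form n := bigOr [seq Dia j a | j <- enum 'I_n].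
Fixpoint diaIt n (i : nat) (a : form n) : form n :=
  match i with
  | 0 => a
  | i'.+1 => diaIt i' (dia1 a)
  end.
Definition diaLe n (m : nat) (a : form n) : form n :=
  bigOr [seq diaIt i a | i <- iota 0 m.+1].
Definition boxLe n (m : nat) (a : form n) : form n := Neg (diaLe m (Neg a)).

Definition pretrans_at n (L : form n -> Prop) (m : nat) : Prop :=
  L (Imp (diaIt m.+1 (Var n 0)) (diaLe m (Var n 0))).

(* m is the least pretransitivity index of L (so Dia* = Dia^{<= m}). *)
Definition least_pretrans n (L : form n -> Prop) (m : nat) : Prop :=
  pretrans_at L m /\ forall k, k < m -> ~ pretrans_at L k.

Definition B1 (n m : nat) : form n :=
  Imp (Var n 1) (boxLe m (Or (diaLe m (Var n 1)) Bot)).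

Definition L1_prov n (L : form n -> Prop) (m : nat) (a : form n) : Prop :=
  deriv (fun b => L b \/ b = @B1 n m) a.

From mathcomp Require Import all_boot zify.
From Stdlib Require List.
Set Implicit Arguments. Unset Strict Implicit. Unset Printing Implicit Defensive.

(* Write D and B for Dia* and Box*.  Pretransitivity makes D a normal diamond
   with D D a -> D a, so B is an S4 box.

   Right to left: B1 gives the symmetry schema a -> B (D a) in L[1], and any
   such S5-like logic derives B psi -> B (D (B psi)) -> B (D (B phi)) -> B phi.

   Left to right: by induction on derivations, every theorem x of L[1] is
   invisible to D B from within L, i.e. L |- D (B r) -> D (B (r /\ x')) for
   every r and every substitution instance x' of x; the only real case is B1.
   Applied to x = B psi -> B phi and r = psi /\ B (~ B phi), whose enlarged
   box is inconsistent, this gives D (B psi) /\ ~ D (B phi) -> bot. *)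

(** * Propositional tautologies *)

Inductive pform := PVar of nat | PBot | PImp of pform & pform.

Fixpoint peval (v : nat -> bool) (p : pform) : bool :=
  match p with
  | PVar i => v i
  | PBot => false
  | PImp a b => peval v a ==> peval v b
  end.

Fixpoint pvar_max (p : pform) : nat :=
  match p with
  | PVar i => i
  | PBot => 0
  | PImp a b => maxn (pvar_max a) (pvar_max b)
  end.

Definition set_val (v : nat -> bool) k b i := if i == k then b else v i.

Fixpoint taut_below (k : nat) (v : nat -> bool) (p : pform) : bool :=
  if k is k'.+1 then
    taut_below k' (set_val v k' true) p && taut_below k' (set_val v k' false) p
  else peval v p.

Definition ptaut (p : pform) : bool :=
  taut_below (pvar_max p).+1 (fun _ => false) p.

Lemma peval_ext p v w :
  (forall i, i <= pvar_max p -> v i = w i) -> peval v p = peval w p.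
Proof.
elim: p => [i|//|a IHa b IHb] /= Hvw; first exact: Hvw.
rewrite IHa ?IHb // => i Hi; apply: Hvw.
- by rewrite (leq_trans Hi) // leq_maxr.
- by rewrite (leq_trans Hi) // leq_maxl.
Qed.

Lemma taut_belowP k v p :
  taut_below k v p -> forall w, (forall i, k <= i -> w i = v i) -> peval w p.
Proof.
elim: k v => [|k IH] v /= => [Hp w Hw|/andP [Ht Hf] w Hw].
  by rewrite (@peval_ext p w v) // => i _; apply: Hw.
have Hw' : forall i, k <= i -> w i = set_val v k (w k) i.
  move=> i Hi; rewrite /set_val; case: eqP => [->//|ne]; apply: Hw.
  by rewrite ltn_neqAle Hi andbT eq_sym; apply/eqP.
by case: (w k) Hw' => Hw'; [exact: IH Ht w Hw' | exact: IH Hf w Hw'].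
Qed.

Lemma ptautP p : ptaut p -> forall v, peval v p.
Proof.
move=> Hp v; pose w i := if i <= pvar_max p then v i else false.
rewrite (@peval_ext p v w) => [|i Hi]; last by rewrite /w Hi.
by apply: (taut_belowP Hp) => i Hi; rewrite /w leqNgt Hi.
Qed.

Lemma mem_In (T : eqType) (x : T) (s : seq T) : x \in s -> List.In x s.
Proof.
elim: s => [//|y s IH]; rewrite in_cons => /orP [/eqP ->|/IH]; by [left | right].
Qed.

Section Hilbert.
Variables (n : nat) (L : form n -> Prop).
Hypothesis HL : normal_logic L.

Lemma L_MP a b : L (Imp a b) -> L a -> L b.
Proof. by move=> Hab Ha; apply: HL; apply: d_MP (d_hyp Hab) (d_hyp Ha). Qed.

Lemma L_MP_rev a b : L a -> L (Imp a b) -> L b.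
Proof. by move=> Ha Hab; apply: L_MP Hab Ha. Qed.

Lemma L_A1 a b : L (Imp a (Imp b a)).
Proof. by apply: HL; apply: d_A1. Qed.

Lemma L_A2 a b c : L (Imp (Imp a (Imp b c)) (Imp (Imp a b) (Imp a c))).
Proof. by apply: HL; apply: d_A2. Qed.

Lemma L_A3 a : L (Imp (Neg (Neg a)) a).
Proof. by apply: HL; apply: d_A3. Qed.

Lemma L_id a : L (Imp a a).
Proof. exact: L_MP (L_MP (L_A2 a (Imp a a) a) (L_A1 _ _)) (L_A1 a a). Qed.

Lemma L_weaken a b : L b -> L (Imp a b).
Proof. exact: L_MP (L_A1 _ _). Qed.

Lemma L_trans a b c : L (Imp a b) -> L (Imp b c) -> L (Imp a c).
Proof. by move=> Hab Hbc; apply: L_MP (L_MP (L_A2 _ _ _) (L_weaken a Hbc)) Hab. Qed.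

Lemma L_efq a : L (Imp Bot a).
Proof. exact: L_trans (L_A1 Bot (Neg a)) (L_A3 a). Qed.

Definition imps (G : seq (form n)) (a : form n) : form n := foldr (@Imp n) a G.

Lemma imps_rcons G a b : imps (rcons G a) b = imps G (Imp a b).
Proof. by rewrite /imps foldr_rcons. Qed.

Lemma imps_weaken G a : L a -> L (imps G a).
Proof. by elim: G => [|g G IH] //= /IH; apply: L_weaken. Qed.

Lemma imps_MP G a b : L (imps G (Imp a b)) -> L (imps G a) -> L (imps G b).
Proof.
have distr : L (Imp (imps G (Imp a b)) (Imp (imps G a) (imps G b))).
  elim: G => [|g G IH] /=; first exact: L_id.
  exact: L_trans (L_MP (L_A2 _ _ _) (L_weaken g IH)) (L_A2 _ _ _).
by move=> Hab Ha; apply: L_MP (L_MP distr Hab) Ha.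
Qed.

Lemma imps_hyp G a : List.In a G -> L (imps G a).
Proof.
have last_hyp : forall G, L (Imp a (imps G a)).
  by elim=> [|g G' IH] /=; [exact: L_id | exact: L_trans IH (L_A1 _ _)].
elim: G => [//|g G IH] /= [->|/IH]; [exact: last_hyp | exact: L_weaken].
Qed.

Lemma L_neg_imp a b : L (Imp (Neg a) (Imp a b)).
Proof.
apply: (@imps_MP [:: Neg a; a]) (imps_weaken _ (L_efq b)) _.
by apply: (imps_MP (a := a)) (imps_hyp (a := Neg a) _) (imps_hyp _); simpl; auto.
Qed.

Lemma L_not_imp a b : L (Imp a (Imp (Neg b) (Neg (Imp a b)))).
Proof.
apply: (@imps_MP [:: a; Neg b; Imp a b]) (imps_hyp (a := Neg b) _) _; first by simpl; auto.
by apply: imps_MP (imps_hyp (a := Imp a b) _) (imps_hyp _); simpl; auto.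
Qed.

Lemma L_cases a b : L (Imp (Imp a b) (Imp (Imp (Neg a) b) b)).
Proof.
set ctx := [:: Imp a b; Imp (Neg a) b; Neg b].
have not_a : L (imps ctx (Neg a)).
  rewrite -imps_rcons.
  apply: imps_MP (imps_hyp (a := Neg b) _) _; first by simpl; auto.
  by apply: imps_MP (imps_hyp (a := Imp a b) _) (imps_hyp _); simpl; auto.
apply: (@imps_MP [:: Imp a b; Imp (Neg a) b]) (imps_weaken _ (L_A3 b)) _.
apply: imps_MP (imps_hyp (G := ctx) (a := Neg b) _) _; first by simpl; auto.
by apply: imps_MP (imps_hyp (a := Imp (Neg a) b) _) not_a; simpl; auto.
Qed.

Fixpoint pinterp (e : nat -> form n) (p : pform) : form n :=
  match p with
  | PVar i => e i
  | PBot => Bot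
  | PImp a b => Imp (pinterp e a) (pinterp e b)
  end.

(* Kalmar's lemma: under the literals fixed by a valuation, every formula or
   its negation is derivable; the literals are then discharged one by one. *)
Section Kalmar.
Variable e : nat -> form n.

Definition lit i (b : bool) : form n := if b then e i else Neg (e i).
Definition lits (v : nat -> bool) k : seq (form n) := [seq lit i (v i) | i <- iota 0 k].

Lemma lits_S v k : lits v k.+1 = rcons (lits v k) (lit k (v k)).
Proof. by rewrite /lits -addn1 iotaD map_cat cats1. Qed.

Lemma lits_set_val v k b : lits (set_val v k b) k = lits v k.
Proof.
apply/eq_in_map => i; rewrite mem_iota add0n /= /set_val => Hi.
by rewrite ifF // ltn_eqF.
Qed.

Lemma kalmar p v k : pvar_max p < k ->
  L (imps (lits v k) (if peval v p then pinterp e p else Neg (pinterp e p))).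
Proof.
elim: p => [i||a IHa b IHb] /= Hk.
- by apply/imps_hyp/(List.in_map (fun i => lit i (v i)))/mem_In; rewrite mem_iota.
- exact: imps_weaken (L_id _).
have /IHa Ha : pvar_max a < k by rewrite (leq_ltn_trans _ Hk) // leq_maxl.
have /IHb Hb : pvar_max b < k by rewrite (leq_ltn_trans _ Hk) // leq_maxr.
case: (peval v a) Ha; case: (peval v b) Hb => /= Hb Ha.
- exact: imps_MP (imps_weaken _ (L_A1 _ _)) Hb.
- exact: imps_MP (imps_MP (imps_weaken _ (L_not_imp _ _)) Ha) Hb.
- exact: imps_MP (imps_weaken _ (L_A1 _ _)) Hb.
- exact: imps_MP (imps_weaken _ (L_neg_imp _ _)) Ha.
Qed.

Lemma lits_discharge q k j :
  (forall v, L (imps (lits v (k + j)) q)) -> forall v, L (imps (lits v k) q).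
Proof.
elim: j k => [|j IH] k; first by rewrite addn0.
rewrite -addSnnS => /IH {}IH v.
have := IH (set_val v k true); have := IH (set_val v k false).
rewrite !lits_S !lits_set_val !imps_rcons /lit /set_val eqxx => Hf Ht.
exact: imps_MP (imps_MP (imps_weaken _ (L_cases _ _)) Ht) Hf.
Qed.

End Kalmar.

Lemma taut_provable e p : ptaut p -> L (pinterp e p).
Proof.
move/ptautP=> Hp.
apply: (@lits_discharge e _ 0 (pvar_max p).+1) (fun _ => false) => v.
by have := kalmar e v (ltnSn (pvar_max p)); rewrite Hp.
Qed.

End Hilbert.

Ltac atom_index x l :=
  lazymatch l with
  | cons x _ => constr:(0)
  | cons _ ?l' => let k := atom_index x l' in constr:(S k)
  end.

Ltac add_atom x l :=
  match constr:(tt) with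
  | _ => let k := atom_index x l in l
  | _ => constr:(cons x l)
  end.

(* [Dia] and [boxLe] are unfolded one level so that they share atoms with
   [Box] and [diaLe]. *)
Ltac atoms t l :=
  lazymatch t with
  | @Bot _ => l
  | Imp ?a ?b => let l := atoms a l in atoms b l
  | Neg ?a => atoms a l
  | Or ?a ?b => let l := atoms a l in atoms b l
  | Dia ?i ?a => add_atom (Box i (Neg a)) l
  | boxLe ?m ?a => add_atom (diaLe m (Neg a)) l
  | _ => add_atom t l
  end.

Ltac reify t l :=
  lazymatch t with
  | @Bot _ => constr:(PBot)
  | Imp ?a ?b => let ra := reify a l in let rb := reify b l in constr:(PImp ra rb)
  | Neg ?a => let ra := reify a l in constr:(PImp ra PBot)
  | Or ?a ?b =>
      let ra := reify a l in let rb := reify b l in constr:(PImp (PImp ra PBot) rb)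
  | Dia ?i ?a => let k := atom_index (Box i (Neg a)) l in constr:(PImp (PVar k) PBot)
  | boxLe ?m ?a => let k := atom_index (diaLe m (Neg a)) l in constr:(PImp (PVar k) PBot)
  | _ => let k := atom_index t l in constr:(PVar k)
  end.

(* Proves [L t] for a propositional tautology [t], reading modal subformulas as atoms. *)
Ltac ptauto :=
  repeat match goal with x := _ |- _ => subst x end; cbv beta;
  match goal with
  | HL : normal_logic ?L |- ?L ?t =>
      let T := type of t in
      let l := atoms t constr:(@nil T) in
      let p := reify t l in
      refine (@taut_provable _ _ HL (fun i => nth Bot l i) p _);
      vm_compute; reflexivity
  end.

Ltac add_premise H :=
  match goal with HL : normal_logic ?L |- ?L _ => apply: (L_MP_rev HL H) end.

Notation And a b := (Neg (Imp a (Neg b))).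

(** * Substitution *)

Section Subst.
Variable n : nat.
Implicit Types (s : nat -> form n) (a : form n).

Lemma subst_bigOr s l : subst s (bigOr l) = bigOr (map (subst s) l).
Proof. by elim: l => [|a [|b l] IH] //=; rewrite IH. Qed.

Lemma subst_dia1 s a : subst s (dia1 a) = dia1 (subst s a).
Proof. by rewrite /dia1 subst_bigOr -map_comp. Qed.

Lemma subst_diaIt s i a : subst s (diaIt i a) = diaIt i (subst s a).
Proof. by elim: i a => [|i IH] a //=; rewrite IH subst_dia1. Qed.

Lemma subst_diaLe s m a : subst s (diaLe m a) = diaLe m (subst s a).
Proof. by rewrite /diaLe subst_bigOr -map_comp; congr bigOr; apply: eq_map => i /=; apply: subst_diaIt. Qed.

Lemma subst_boxLe s m a : subst s (boxLe m a) = boxLe m (subst s a).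
Proof. by rewrite /boxLe /Neg /= subst_diaLe. Qed.

Lemma subst_comp s t a : subst s (subst t a) = subst (fun k => subst s (t k)) a.
Proof. by elim: a => //= [a IHa b IHb|i a IH]; rewrite ?IHa ?IHb ?IH. Qed.

Lemma subst_Var a : subst (@Var n) a = a.
Proof. by elim: a => //= [a IHa b IHb|i a IH]; rewrite ?IHa ?IHb ?IH. Qed.

Lemma subst_B1 m s : subst s (B1 n m) = Imp (s 1) (boxLe m (Or (diaLe m (s 1)) Bot)).
Proof.
change (Imp (s 1) (subst s (boxLe m (Or (diaLe m (Var n 1)) Bot)))
  = Imp (s 1) (boxLe m (Or (diaLe m (s 1)) Bot))).
by rewrite subst_boxLe /Or /Neg /= subst_diaLe.
Qed.

Lemma diaIt_add i j a : diaIt i (diaIt j a) = diaIt (j + i) a.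
Proof. by elim: j a => [|j IH] a //=; rewrite IH. Qed.

End Subst.

(** * Normal diamonds *)

Section NormalDiamonds.
Variables (n : nat) (L : form n -> Prop).
Hypothesis HL : normal_logic L.

Lemma L_nec i a : L a -> L (Box i a).
Proof. by move=> Ha; apply: HL; apply: d_Nec; apply: d_hyp. Qed.

Lemma L_K i a b : L (Imp (Box i (Imp a b)) (Imp (Box i a) (Box i b))).
Proof. by apply: HL; apply: d_K. Qed.

Lemma L_subst s a : L a -> L (subst s a).
Proof. by move=> Ha; apply: HL; apply: d_Sub; apply: d_hyp. Qed.

Lemma Box_mono i a b : L (Imp a b) -> L (Imp (Box i a) (Box i b)).
Proof. by move=> Hab; exact (L_MP HL (L_K i a b) (L_nec i Hab)). Qed.

(* [f] is, provably in [L], the dual of a normal box. *)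
Record normal_dia (f : form n -> form n) : Prop := NormalDia {
  nd_mono : forall a b, L (Imp a b) -> L (Imp (f a) (f b));
  nd_K : forall a c, L (Imp (f a) (Imp (Neg (f (Neg c))) (f (And a c))));
  nd_bot : L (Imp (f Bot) Bot) }.

Lemma normal_dia_Dia i : normal_dia (Dia i).
Proof.
split.
- move=> a b Hab.
  have /(Box_mono i) Hba : L (Imp (Neg b) (Neg a)) by add_premise Hab; ptauto.
  by add_premise Hba; ptauto.
- move=> a c.
  have Hc : L (Imp (Neg (Neg c)) (Imp (Neg (And a c)) (Neg a))) by ptauto.
  have H1 := L_MP HL (L_K i _ _) (L_nec i Hc).
  have H2 := L_K i (Neg (And a c)) (Neg a).
  by add_premise H1; add_premise H2; ptauto.
- have H : L (Box i (Neg Bot)) by apply: L_nec; ptauto.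
  by add_premise H; ptauto.
Qed.

Lemma normal_dia_id : normal_dia id.
Proof. by split=> [a b|a c|] //; ptauto. Qed.

Lemma normal_dia_comp f g : normal_dia f -> normal_dia g -> normal_dia (fun a => f (g a)).
Proof.
move=> [fmono fK fbot] [gmono gK gbot]; split.
- by move=> a b Hab; apply/fmono/gmono.
- move=> a c.
  have H1 : L (Imp (f (Neg (Neg (g (Neg c))))) (f (g (Neg c)))) by apply: fmono; ptauto.
  have H2 := fK (g a) (Neg (g (Neg c))).
  have H3 : L (Imp (f (And (g a) (Neg (g (Neg c))))) (f (g (And a c)))).
    by apply: fmono; have := gK a c => H; add_premise H; ptauto.
  by add_premise H1; add_premise H2; add_premise H3; ptauto.
- have H := fmono _ _ gbot.
  by add_premise H; add_premise fbot; ptauto.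
Qed.

Lemma bigOr_map_intro (T : eqType) (f : T -> form n) s x :
  x \in s -> L (Imp (f x) (bigOr (map f s))).
Proof.
elim: s => [//|y s IH]; rewrite in_cons => /orP [/eqP ->|xs].
  case: s {IH} => [|z s]; first exact (L_id HL _).
  by change (L (Imp (f y) (Or (f y) (bigOr (map f (z :: s)))))); ptauto.
case: s IH xs => [//|z s] IH xs; have H := IH xs.
by change (L (Imp (f x) (Or (f y) (bigOr (map f (z :: s)))))); add_premise H; ptauto.
Qed.

Lemma bigOr_map_elim (T : eqType) (f : T -> form n) s b :
  (forall x, x \in s -> L (Imp (f x) b)) -> L (Imp (bigOr (map f s)) b).
Proof.
elim: s => [|y s IH] Hs; first exact (L_efq HL _).
have Hy : L (Imp (f y) b) by apply: Hs; rewrite mem_head.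
case: s IH Hs => [//|z s] IH Hs.
have Hzs : L (Imp (bigOr (map f (z :: s))) b).
  by apply: IH => x xs; apply: Hs; rewrite in_cons xs orbT.
change (L (Imp (Or (f y) (bigOr (map f (z :: s)))) b)).
by add_premise Hy; add_premise Hzs; ptauto.
Qed.

Lemma normal_dia_bigOr (T : eqType) (s : seq T) (g : T -> form n -> form n) :
  (forall x, normal_dia (g x)) -> normal_dia (fun a => bigOr (map (fun x => g x a) s)).
Proof.
move=> Hg; split.
- move=> a b Hab; apply: bigOr_map_elim => x xs.
  exact (L_trans HL (nd_mono (Hg x) Hab) (bigOr_map_intro (fun x => g x b) xs)).
- move=> a c; apply: bigOr_map_elim => x xs.
  have H1 := nd_K (Hg x) a c.
  have H2 := bigOr_map_intro (fun x => g x (Neg c)) xs.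
  have H3 := bigOr_map_intro (fun x => g x (And a c)) xs.
  by add_premise H1; add_premise H2; add_premise H3; ptauto.
- by apply: bigOr_map_elim => x _; apply: nd_bot.
Qed.

Lemma nd_Or f a b : normal_dia f -> L (Imp (f (Or a b)) (Or (f a) (f b))).
Proof.
case=> mono K _.
have H1 := K (Or a b) (Neg a).
have H2 : L (Imp (f (And (Or a b) (Neg a))) (f b)) by apply: mono; ptauto.
have H3 : L (Imp (f (Neg (Neg a))) (f a)) by apply: mono; ptauto.
by add_premise H1; add_premise H2; add_premise H3; ptauto.
Qed.

Lemma nd_bigOr f l : normal_dia f -> L (Imp (f (bigOr l)) (bigOr (map f l))).
Proof.
move=> Hf; elim: l => [|a l IH]; first exact: nd_bot Hf.
case: l IH => [|b l] IH; first exact (L_id HL _).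
have H := nd_Or a (bigOr (b :: l)) Hf.
change (L (Imp (f (Or a (bigOr (b :: l)))) (Or (f a) (bigOr (map f (b :: l)))))).
by add_premise H; add_premise IH; ptauto.
Qed.

Lemma normal_dia_dia1 : normal_dia (@dia1 n).
Proof. exact: (@normal_dia_bigOr _ (enum 'I_n) (@Dia n) normal_dia_Dia). Qed.

Lemma normal_dia_diaIt k : normal_dia (diaIt k).
Proof.
elim: k => [|k IH]; first exact: normal_dia_id.
exact: normal_dia_comp IH normal_dia_dia1.
Qed.

Lemma normal_dia_diaLe m : normal_dia (diaLe m).
Proof. exact: (@normal_dia_bigOr _ (iota 0 m.+1) (@diaIt n) normal_dia_diaIt). Qed.

End NormalDiamonds.

(** * The master modalities of a pretransitive logic *)

Section Pretransitive.
Variables (n : nat) (L : form n -> Prop) (m : nat).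
Hypothesis HL : normal_logic L.
Local Notation D := (diaLe m).
Local Notation B := (boxLe m).

Lemma diaLe_mono a b : L (Imp a b) -> L (Imp (D a) (D b)).
Proof. exact: nd_mono (normal_dia_diaLe HL m) a b. Qed.

Lemma diaLe_K a c : L (Imp (D a) (Imp (Neg (D (Neg c))) (D (And a c)))).
Proof. exact: nd_K (normal_dia_diaLe HL m) a c. Qed.

Lemma diaLe_bot : L (Imp (D Bot) Bot).
Proof. exact (nd_bot (normal_dia_diaLe HL m)). Qed.

Lemma diaIt_diaLe k a : k <= m -> L (Imp (diaIt k a) (D a)).
Proof.
by move=> km; apply: (bigOr_map_intro HL (fun i => diaIt i a)); rewrite mem_iota.
Qed.

Lemma diaLe_refl a : L (Imp a (D a)).
Proof. exact: diaIt_diaLe 0 a (leq0n m). Qed.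

Lemma diaIt_diaLe_shift j a :
  (forall i, i <= m -> L (Imp (diaIt (i + j) a) (D a))) ->
  L (Imp (diaIt j (D a)) (D a)).
Proof.
move=> Hj.
have H := nd_bigOr HL [seq diaIt i a | i <- iota 0 m.+1] (normal_dia_diaIt HL j).
apply: (L_trans HL H); rewrite -map_comp.
apply: (bigOr_map_elim HL) => i; rewrite mem_iota add0n ltnS => /andP [_ im] /=.
by rewrite diaIt_add; apply: Hj.
Qed.

Lemma boxLe_mono a b : L (Imp a b) -> L (Imp (B a) (B b)).
Proof.
move=> Hab; have /diaLe_mono H : L (Imp (Neg b) (Neg a)) by add_premise Hab; ptauto.
by add_premise H; ptauto.
Qed.

Lemma boxLe_refl a : L (Imp (B a) a).
Proof. by have H := diaLe_refl (Neg a); add_premise H; ptauto. Qed.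

Lemma boxLe_and a b : L (Imp (B a) (Imp (B b) (B (And a b)))).
Proof.
have H1 := diaLe_K (Neg (And a b)) b.
have /diaLe_mono H2 : L (Imp (And (Neg (And a b)) b) (Neg a)) by ptauto.
by add_premise H1; add_premise H2; ptauto.
Qed.

Lemma boxLe_nec a : L a -> L (B a).
Proof.
move=> Ha; have /diaLe_mono H : L (Imp (Neg a) Bot) by add_premise Ha; ptauto.
by add_premise H; add_premise diaLe_bot; ptauto.
Qed.

Hypothesis Hpt : pretrans_at L m.

Lemma diaIt_diaLe_pretrans k a : L (Imp (diaIt k a) (D a)).
Proof.
elim/ltn_ind: k a => k IH a.
case: (leqP k m) => [km|mk]; first exact: diaIt_diaLe.
have Hpt_a : L (Imp (diaIt m.+1 a) (D a)).
  have := L_subst HL (fun _ => a) Hpt.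
  by rewrite [subst _ _]/= subst_diaIt subst_dia1 subst_diaLe.
have -> : diaIt k a = diaIt (k - m.+1) (diaIt m.+1 a) by rewrite diaIt_add subnKC.
apply: (L_trans HL (nd_mono (normal_dia_diaIt HL _) Hpt_a)).
by apply: diaIt_diaLe_shift => i im; apply: IH; lia.
Qed.

Lemma diaLe_trans a : L (Imp (D (D a)) (D a)).
Proof.
apply: (bigOr_map_elim HL) => i _.
by apply: diaIt_diaLe_shift => j _; apply: diaIt_diaLe_pretrans.
Qed.

Lemma Dia_diaLe i a : L (Imp (Dia i a) (D a)).
Proof.
apply: (L_trans HL _ (diaIt_diaLe_pretrans 1 a)).
by apply: (bigOr_map_intro HL (fun j => Dia j a)); rewrite mem_enum.
Qed.

Lemma boxLe_trans a : L (Imp (B a) (B (B a))).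
Proof.
have /diaLe_mono H1 : L (Imp (Neg (B a)) (D (Neg a))) by ptauto.
have H2 := diaLe_trans (Neg a).
by add_premise H1; add_premise H2; ptauto.
Qed.

Lemma boxLe_Box i a : L (Imp (B a) (Box i a)).
Proof.
have H1 := Dia_diaLe i (Neg a).
have /(Box_mono HL i) H2 : L (Imp (Neg (Neg a)) a) by ptauto.
by add_premise H1; add_premise H2; ptauto.
Qed.

Definition DB_invariant (x : form n) : Prop :=
  forall s r, L (Imp (D (B r)) (D (B (And r (subst s x))))).

Lemma DB_invariant_L x : L x -> DB_invariant x.
Proof.
move=> Hx s r; apply: diaLe_mono.
have Hsx := boxLe_nec (L_subst HL s Hx).
have H := boxLe_and r (subst s x).
by add_premise Hsx; add_premise H; ptauto.
Qed.

Lemma DB_invariant_MP a b : DB_invariant (Imp a b) -> DB_invariant a -> DB_invariant b.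
Proof.
move=> Hab Ha s r.
have H1 := Ha s r.
have H2 := Hab s (And r (subst s a)).
have /boxLe_mono/diaLe_mono H3 :
  L (Imp (And (And r (subst s a)) (Imp (subst s a) (subst s b))) (And r (subst s b))).
  by ptauto.
exact (L_trans HL H1 (L_trans HL H2 H3)).
Qed.

Lemma DB_invariant_Box i a : DB_invariant a -> DB_invariant (Box i a).
Proof.
move=> Ha s r; apply: (L_trans HL (Ha s r)); apply: diaLe_mono.
change (subst s (Box i a)) with (Box i (subst s a)); set x := subst s a.
have /boxLe_mono H1 : L (Imp (And r x) r) by ptauto.
have /boxLe_mono H2 : L (Imp (And r x) x) by ptauto.
have /boxLe_mono H3 := boxLe_Box i x.
have H4 := boxLe_and r (Box i x).
have H5 := boxLe_trans x.
by add_premise H1; add_premise H2; add_premise H3; add_premise H4; add_premise H5; ptauto.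
Qed.

Lemma DB_invariant_subst t a : DB_invariant a -> DB_invariant (subst t a).
Proof. by move=> Ha s r; rewrite subst_comp; apply: Ha. Qed.

(* Split the world seen by [D] according to [E := B r /\ B (Neg th)]: where [E]
   holds the implication [th -> ...] is vacuous under [B]; where [E] fails
   everywhere, [B r] forces [D th], which [B] keeps by transitivity. *)
Lemma DB_invariant_B1 : DB_invariant (B1 n m).
Proof.
move=> s r; rewrite subst_B1.
set th := s 1; set chi := Imp th (B (Or (D th) Bot)).
set E := And (B r) (B (Neg th)).
have in_E : L (Imp E (B (And r chi))).
  have /boxLe_mono H1 : L (Imp (Neg th) chi) by ptauto.
  have H2 := boxLe_and r chi.
  by add_premise H1; add_premise H2; ptauto.
have off_E : L (Imp (And (B r) (B (Neg E))) (B (And r chi))).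
  have H1 := boxLe_trans r.
  have H2 := boxLe_and (B r) (Neg E).
  have /diaLe_mono H3 : L (Imp (Neg (Neg th)) th) by ptauto.
  have /boxLe_mono H4 : L (Imp (And (B r) (Neg E)) (D th)) by add_premise H3; ptauto.
  have H5 := boxLe_trans (D th).
  have /boxLe_mono H6 : L (Imp (B (D th)) chi).
    have /boxLe_mono H7 : L (Imp (D th) (Or (D th) Bot)) by ptauto.
    by add_premise H7; ptauto.
  have H8 := boxLe_and r chi.
  by add_premise H1; add_premise H2; add_premise H4; add_premise H5; add_premise H6;
     add_premise H8; ptauto.
have split_E : L (Imp (D (B r)) (Or (D E) (D (And (B r) (B (Neg E)))))).
  have H1 := diaLe_K (B r) (B (Neg E)).
  have H2 := boxLe_trans (Neg E).
  have /diaLe_mono H3 : L (Imp (Neg (Neg E)) E) by ptauto.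
  by add_premise H1; add_premise H2; add_premise H3; ptauto.
have /diaLe_mono H1 := in_E; have /diaLe_mono H2 := off_E.
by add_premise split_E; add_premise H1; add_premise H2; ptauto.
Qed.

Lemma L1_DB_invariant x : L1_prov L m x -> DB_invariant x.
Proof.
elim=> {x} [x [Hx|->]|a b|a b c|a|i a b|a b _ Hab _ Ha|i a _ Ha|t a _ Ha].
- exact: DB_invariant_L.
- exact: DB_invariant_B1.
- by apply: DB_invariant_L; apply: HL; apply: d_A1.
- by apply: DB_invariant_L; apply: HL; apply: d_A2.
- by apply: DB_invariant_L; apply: HL; apply: d_A3.
- by apply: DB_invariant_L; apply: HL; apply: d_K.
- exact: DB_invariant_MP Hab Ha.
- exact: DB_invariant_Box.
- exact: DB_invariant_subst.
Qed.

Lemma diaLe_boxLe_of_DB_invariant phi psi :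
  DB_invariant (Imp (B psi) (B phi)) -> L (Imp (D (B psi)) (D (B phi))).
Proof.
move=> H.
pose r := And psi (B (Neg (B phi))).
have := H (@Var n) r; rewrite subst_Var => Hr.
have inconsistent : L (Imp (D (B (And r (Imp (B psi) (B phi))))) Bot).
  apply: (L_trans HL _ diaLe_bot); apply: diaLe_mono.
  have H1 := boxLe_refl (And r (Imp (B psi) (B phi))).
  have /boxLe_mono H2 : L (Imp (And r (Imp (B psi) (B phi))) psi) by ptauto.
  have H3 := boxLe_refl (Neg (B phi)).
  by add_premise H1; add_premise H2; add_premise H3; ptauto.
have reach_r : L (Imp (D (B psi)) (Imp (Neg (D (B phi))) (D (B r)))).
  have /diaLe_mono H1 : L (Imp (Neg (Neg (B phi))) (B phi)) by ptauto.
  have H2 := boxLe_trans (Neg (B phi)).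
  have H3 := boxLe_trans (B (Neg (B phi))).
  have H4 := diaLe_K (B psi) (B (B (Neg (B phi)))).
  have /diaLe_mono H5 : L (Imp (And (B psi) (B (B (Neg (B phi))))) (B r)).
    by have H6 := boxLe_and psi (B (Neg (B phi))); add_premise H6; ptauto.
  by add_premise H1; add_premise H2; add_premise H3; add_premise H4; add_premise H5; ptauto.
by add_premise Hr; add_premise inconsistent; add_premise reach_r; ptauto.
Qed.

Section Symmetric.
Hypothesis Hsym : forall a, L (Imp a (B (D a))).

Lemma boxLe_imp_of_diaLe_boxLe phi psi :
  L (Imp (D (B psi)) (D (B phi))) -> L (Imp (B psi) (B phi)).
Proof.
move=> H.
have H1 := diaLe_refl (B psi).
have H2 := Hsym (D (B phi)).
have /boxLe_mono H3 := diaLe_trans (B phi).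
(* [B (D (Neg phi))] is literally [Neg (D (B phi))]. *)
have H4 : L (Imp (Neg phi) (Neg (D (B phi)))) := Hsym (Neg phi).
have /boxLe_mono H5 : L (Imp (D (B phi)) phi) by add_premise H4; ptauto.
by add_premise H1; add_premise H; add_premise H2; add_premise H3; add_premise H5; ptauto.
Qed.

End Symmetric.

End Pretransitive.

Lemma deriv_normal n (G : form n -> Prop) : normal_logic (deriv G).
Proof.
move=> a; elim=> {a} [//|a b|a b c|a|i a b|a b _ Hab _ Ha|i a _ Ha|s a _ Ha].
- exact: d_A1.
- exact: d_A2.
- exact: d_A3.
- exact: d_K.
- exact: d_MP Hab Ha.
- exact: d_Nec.
- exact: d_Sub.
Qed.

Lemma L1_boxLe_diaLe n (L : form n -> Prop) m a :
  L1_prov L m (Imp a (boxLe m (diaLe m a))).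
Proof.
have HL1 : normal_logic (L1_prov L m) := @deriv_normal n _.
have := d_Sub (fun _ => a) (d_hyp (or_intror (erefl (B1 n m))) : L1_prov L m _).
rewrite subst_B1 => H.
have /(boxLe_mono m HL1) H' : L1_prov L m (Imp (Or (diaLe m a) Bot) (diaLe m a)) by ptauto.
exact (L_trans HL1 H H').
Qed.

Theorem theorem3p6 (n : nat) (L : form n -> Prop) (m : nat) :
  normal_logic L -> least_pretrans L m ->
  forall phi psi : form n,
    L1_prov L m (Imp (boxLe m psi) (boxLe m phi)) <->
    L (Imp (diaLe m (boxLe m psi)) (diaLe m (boxLe m phi))).
Proof.
move=> HL [Hpt _] phi psi; split=> [/(L1_DB_invariant HL Hpt)|H].
  exact: diaLe_boxLe_of_DB_invariant m HL Hpt _ _.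
have HL1 : normal_logic (L1_prov L m) := @deriv_normal n _.
have Hpt1 : pretrans_at (L1_prov L m) m := d_hyp (or_introl Hpt).
exact: boxLe_imp_of_diaLe_boxLe m HL1 Hpt1 (@L1_boxLe_diaLe n L m) _ _ (d_hyp (or_introl H)).
Qed.
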